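(* For $r=1,\dots,N$, $$Z_r=\sum_{\substack{\mu\subseteq\lambda\\|\mu|=r}}\ \sum_{\nu\subseteq\mu}\left[\left(\prod_{i=1}^n(1-i)^{\mu_i-\nu_i}\binom{\lambda_i-\nu_i}{\lambda_i-\mu_i}\right)\times\left(\sum_{w\in S_n}\mathrm{sgn}(w)T_{w1,1}^{(\nu_1)}\cdots T_{wn,n}^{(\nu_n)}\right)\right],$$ where for $i=1$ the factor $(1-i)^{\mu_i-\nu_i}$ is interpreted as $1$ if $\nu_1=\mu_1$ and $0$ otherwise.
   Context: $F$ is an algebraically closed field of characteristic zero; $\lambda=(\lambda_1,\dots,\lambda_n)$ is a composition of $N$ with positive parts and $\lambda_1\le\cdots\le\lambda_n$; $\sigma=(s_{i,j})$ with $s_{i,j}:=\lambda_j-\min(\lambda_i,\lambda_j)$. For compositions, $\nu\subseteq\mu$ means $0\le\nu_i\le\mu_i$ for all $i$, and $|\mu|=\sum_i\mu_i$. $Y_n$ is the $F$-algebra with generators $T_{i,j}^{(r)}$ ($1\le i,j\le n$, $r\ge1$) and relations $[T_{i,j}^{(r)},T_{k,l}^{(s)}]=\sum_{t=0}^{\min(r,s)-1}(T_{k,j}^{(t)}T_{i,l}^{(r+s-1-t)}-T_{k,j}^{(r+s-1-t)}T_{i,l}^{(t)})$, $T_{i,j}^{(0)}=\delta_{i,j}$. With $T(u)=(\sum_rT_{i,j}^{(r)}u^{-r})$ and Gauss factorization $T(u)=F(u)D(u)E(u)$ ($D$ diagonal with entries $D_i(u)=\sum_{r\ge0}D_i^{(r)}u^{-r}$,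 $E$ upper unitriangular with entries $E_{i,j}(u)=\sum_{r\ge1}E_{i,j}^{(r)}u^{-r}$, $F$ lower unitriangular with $(j,i)$-entries $F_{i,j}(u)=\sum_{r\ge1}F_{i,j}^{(r)}u^{-r}$), $Y_n(\sigma)\subseteq Y_n$ is the subalgebra generated by $D_i^{(r)}$ ($r>0$), $E_i^{(r)}:=E_{i,i+1}^{(r)}$ ($r>s_{i,i+1}$), $F_i^{(r)}:=F_{i,i+1}^{(r)}$ ($r>s_{i+1,i}$). Define ${}^\sigma E_{i,i+1}^{(r)}=E_i^{(r)}$, ${}^\sigma E_{i,j}^{(r)}=[{}^\sigma E_{i,j-1}^{(r-s_{j-1,j})},E_{j-1}^{(s_{j-1,j}+1)}]$ ($r>s_{i,j}$), ${}^\sigma F_{i,i+1}^{(r)}=F_i^{(r)}$, ${}^\sigma F_{i,j}^{(r)}=[F_{j-1}^{(s_{j,j-1}+1)},{}^\sigma F_{i,j-1}^{(r-s_{j,j-1})}]$ ($r>s_{j,i}$), ${}^\sigma E_{i,j}(u)=\sum_{r>s_{i,j}}{}^\sigma E_{i,j}^{(r)}u^{-r}$, ${}^\sigma F_{i,j}(u)=\sum_{r>s_{j,i}}{}^\sigma F_{i,j}^{(r)}u^{-r}$, ${}^\sigma E_{i,i}={}^\sigma F_{i,i}=1$, and ${}^\sigma T_{i,j}(u)=\sum_r{}^\sigma T_{i,j}^{(r)}u^{-r}:=\sum_{k=1}^{\min(i,j)}{}^\sigma F_{k,i}(u)D_k(u){}^\sigma E_{k,j}(u)$. $W(\lambda)$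 is the quotient of $Y_n(\sigma)$ by the two-sided ideal generated by $\{D_1^{(r)}:r>\lambda_1\}$, and $T_{i,j}^{(r)}$ denotes the image of ${}^\sigma T_{i,j}^{(r)}$ in $W(\lambda)$ (so $T_{i,j}^{(0)}=\delta_{i,j}$). It is known that $T_{i,j}^{(r)}=0$ in $W(\lambda)$ for $r>\lambda_j$, so with $T_{i,j}(u)=\sum_rT_{i,j}^{(r)}u^{-r}$ the polynomial $Z(u):=\mathrm{cdet}\big((u-j+1)^{\lambda_j}T_{i,j}(u-j+1)\big)_{1\le i,j\le n}\in W(\lambda)[u]$ is well defined, where $\mathrm{cdet}(a_{i,j}):=\sum_{w\in S_n}\mathrm{sgn}(w)a_{w1,1}\cdots a_{wn,n}$; write $Z(u)=u^N+Z_1u^{N-1}+\cdots+Z_N$. *)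

From HB Require Import structures.
From mathcomp Require Import all_boot all_order all_algebra all_fingroup.
Set Implicit Arguments. Unset Strict Implicit. Unset Printing Implicit Defensive.
Import GRing.Theory.
Local Open Scope ring_scope.

(* Indices are 0-based: the paper's index i corresponds to (i : 'I_n) with
   paper value i+1.  Thus the paper's shift u - j + 1 becomes u - j here,
   and the paper's factor (1 - i) becomes - i here. *)

Definition cdet (R : nzRingType) (n : nat) (a : 'I_n -> 'I_n -> R) : R :=
  \sum_(w : 'S_n) (-1) ^+ odd_perm w * \prod_(j < n) a (w j) j.

(* (u-j+1)^{lambda_j} T_{ij}(u-j+1) as a polynomial in u, using
   T_{ij}(u) = sum_{r=0}^{lambda_j} T_{ij}^{(r)} u^{-r}. *)
Definition Zentry (A : nzRingType) (n : nat) (lam : 'I_n -> nat)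
    (T : 'I_n -> 'I_n -> nat -> A) (i j : 'I_n) : {poly A} :=
  \sum_(r < (lam j).+1)
     (T i j r)%:P * ('X - ((j : nat)%:R)%:P) ^+ (lam j - r).

Definition Zpoly (A : nzRingType) (n : nat) (lam : 'I_n -> nat)
    (T : 'I_n -> 'I_n -> nat -> A) : {poly A} :=
  cdet (Zentry lam T).

Definition Zcoef (n : nat) (lam mu nu : 'I_n -> nat) : int :=
  \prod_(i < n)
    ((if (i : nat) == 0%N then (mu i == nu i)%:R
      else (- ((i : nat)%:Z)) ^+ (mu i - nu i)) *
     ('C(lam i - nu i, lam i - mu i))%:R).

From HB Require Import structures.
From mathcomp Require Import all_boot all_order all_algebra all_fingroup.
From mathcomp Require Import zify.
Import GRing.Theory.
Local Open Scope ring_scope.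

(* Binomial expansion of (u - j)^(lam_j - v) shows that the coefficient of
   u^(lam_j - m) in the (i, j) entry of Z(u) is
   sum_(v <= m) T_ij^(v) (-j)^(m - v) C(lam_j - v, m - v), and (-j)^(m - v)
   C(lam_j - v, m - v) is the j-th factor of Zcoef.  Multiplying out each
   product in the column determinant, the coefficient of u^(N - r) collects the
   choices of one such m = mu_j per column with sum mu = r, and distributing
   the inner sums over the columns produces the sum over nu <= mu. *)

Lemma big_ord_addn_widen (V : nmodType) (M L v : nat) (G : nat -> V) :
  (v <= L <= M)%N ->
  \sum_(k < (L - v).+1) G (k + v)%N = \sum_(m < M.+1 | (v <= m <= L)%N) G m.
Proof.
case/andP=> vL LM.
rewrite -(big_mkord xpredT (fun k => G (k + v)%N)) -subSn //.
rewrite -(big_addn 0 L.+1 v xpredT) add0n.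
rewrite (big_nat_widenl _ _ _ _ _ (leq0n v)) (@big_nat_widen _ _ _ 0 L.+1 M.+1 _ _ LM).
by rewrite big_mkord; apply: eq_bigl => m.
Qed.

Lemma prod_polyC_mulXn (A : nzRingType) (I : Type) (s : seq I) (c : I -> A) (e : I -> nat) :
  \prod_(x <- s) ((c x)%:P * 'X^(e x)) = (\prod_(x <- s) c x)%:P * 'X^(\sum_(x <- s) e x).
Proof.
elim: s => [|a s IH]; first by rewrite !big_nil mulr1.
rewrite !big_cons IH exprD polyCM -!mulrA; congr (_ * _).
by rewrite !mulrA (commr_polyXn _ (e a)).
Qed.

Lemma coef_prod_sum_monomials (A : nzRingType) (I J : finType) (P : I -> pred J)
    (a : I -> J -> A) (e : I -> J -> nat) k :
  (\prod_i \sum_(j | P i j) (a i j)%:P * 'X^(e i j))`_k =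
  \sum_(f in family P | (\sum_i e i (f i) == k)%N) \prod_i a i (f i).
Proof.
rewrite bigA_distr_big_dep coef_sum big_mkcondr /=; apply: eq_bigr => f _.
by rewrite prod_polyC_mulXn coefCM coefXn mulr_natr mulrb eq_sym.
Qed.

Lemma prod_mulr_intr (A : nzRingType) (I : Type) (s : seq I) (a : I -> A) (k : I -> int) :
  \prod_(x <- s) (a x * (k x)%:~R) = (\prod_(x <- s) k x)%:~R * \prod_(x <- s) a x.
Proof.
elim: s => [|y s IH]; first by rewrite !big_nil mulr1.
rewrite !big_cons IH intrM !mulrA (commr_int (a y) (k y)) -(mulrA _ (a y)) (commr_int (a y)).
by rewrite !mulrA.
Qed.

Section ZpolyCoefficients.

Variables (A : nzRingType) (n : nat) (lam : 'I_n -> nat).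

Definition Zfactor (j : 'I_n) (m v : nat) : int :=
  (if (j : nat) == 0%N then (m == v)%:R else (- ((j : nat)%:Z)) ^+ (m - v)) *
  ('C(lam j - v, lam j - m))%:R.

Lemma ZcoefE (mu nu : 'I_n -> nat) :
  Zcoef lam mu nu = \prod_(j < n) Zfactor j (mu j) (nu j).
Proof. by []. Qed.

Lemma Zfactor_binomial j m v : (v <= m <= lam j)%N ->
  (Zfactor j m v)%:~R = (- ((j : nat)%:R : A)) ^+ (m - v) *+ 'C(lam j - v, m - v).
Proof.
case/andP=> vm mL; rewrite /Zfactor intrM -[in RHS]mulr_natr.
have -> : (lam j - m = (lam j - v) - (m - v))%N by lia.
rewrite bin_sub; last by lia.
congr (_ * _); last by rewrite pmulrn mulrz_nat.
case: eqP => [-> | _]; last by rewrite rmorphXn rmorphN.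
rewrite oppr0 expr0n subn_eq0 eqn_leq vm andbT.
by case: (m <= v)%N.
Qed.

Variable T : 'I_n -> 'I_n -> nat -> A.

Definition Zentry_coef (M : nat) (i j : 'I_n) (m : nat) : A :=
  \sum_(v < M.+1 | (v <= m)%N) T i j v * (Zfactor j m v)%:~R.

Lemma Zentry_monomials M i j : (lam j <= M)%N ->
  Zentry lam T i j =
  \sum_(m < M.+1 | (m <= lam j)%N) (Zentry_coef M i j m)%:P * 'X^(lam j - m).
Proof.
move=> LM; rewrite /Zentry; set L := lam j.
pose G (v m : nat) := (T i j v * (Zfactor j m v)%:~R)%:P * 'X^(L - m).
have expand (v : 'I_L.+1) : (T i j v)%:P * ('X - ((j : nat)%:R)%:P) ^+ (L - v) =
    \sum_(m < M.+1 | (v <= m <= L)%N) G v m.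
  have vL : (v <= L)%N by rewrite -ltnS.
  rewrite -(@big_ord_addn_widen _ M L v (G v)) ?vL // -polyCN exprDn_comm; last first.
    exact: commr_sym (commr_polyX _).
  rewrite mulr_sumr; apply: eq_bigr => k _; have := ltn_ord k; rewrite ltnS => kLv.
  rewrite /G Zfactor_binomial; last by rewrite leq_addl addnC -leq_subRL.
  rewrite addnK [(k + v)%N]addnC subnDA -polyC_exp -mulrnAr -polyCMn.
  by rewrite -(commr_polyXn _ (L - v - k)) mulrA -polyCM.
rewrite (eq_bigr _ (fun v _ => expand v)).
rewrite (big_ord_widen M.+1 (fun v => \sum_(m < M.+1 | (v <= m <= L)%N) G v m)) //.
rewrite (exchange_big_dep (fun m : 'I_M.+1 => m <= L)%N) /=; last by move=> v m _ /andP[].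
apply: eq_bigr => m mL; rewrite rmorph_sum mulr_suml.
by apply: eq_bigl => v; rewrite mL andbT ltnS; apply/idP/idP; [case/andP | lia].
Qed.

Lemma prod_Zentry_coef (rho : 'I_n -> 'I_n) (mu : 'I_n -> nat) M :
  \prod_(j < n) Zentry_coef M (rho j) j (mu j) =
  \sum_(nu : {ffun 'I_n -> 'I_M.+1} | [forall j, (nu j <= mu j)%N])
    (Zcoef lam mu (fun j => nu j : nat))%:~R * \prod_(j < n) T (rho j) j (nu j).
Proof.
by rewrite bigA_distr_big_dep; apply: eq_bigr => nu _; rewrite prod_mulr_intr ZcoefE.
Qed.

Let N := (\sum_(i < n) lam i)%N.

Lemma coef_prod_Zentry (rho : 'I_n -> 'I_n) r : (r <= N)%N ->
  (\prod_(j < n) Zentry lam T (rho j) j)`_(N - r) =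
  \sum_(mu : {ffun 'I_n -> 'I_N.+1}
          | [forall j, (mu j <= lam j)%N] && ((\sum_(j < n) mu j)%N == r))
    \prod_(j < n) Zentry_coef N (rho j) j (mu j).
Proof.
move=> rN; have lamN j : (lam j <= N)%N by rewrite /N (bigD1 j) //= leq_addr.
rewrite (eq_bigr _ (fun j _ => Zentry_monomials _ (rho j) j (lamN j))).
rewrite coef_prod_sum_monomials; apply: eq_bigl => mu.
rewrite unfold_in; case: forallP => /= [mu_le | mu_gt]; last first.
  by case: forallP => // mu_le; case: mu_gt => j; apply: mu_le.
rewrite (introT forallP mu_le) sumnB -/N ?eqn_sub2lE //; exact: leq_sum.
Qed.

End ZpolyCoefficients.

Theorem lemma3p5 (A : nzRingType) (n : nat) (lam : 'I_n -> nat)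
  (lam_pos : forall i, (0 < lam i)%N)
  (lam_sorted : forall i j : 'I_n, (i <= j)%N -> (lam i <= lam j)%N)
  (T : 'I_n -> 'I_n -> nat -> A)
  (T0 : forall i j, T i j 0%N = (i == j)%:R)
  (Tvanish : forall i j r, (lam j < r)%N -> T i j r = 0)
  (r : nat) :
  let N := (\sum_(i < n) lam i)%N in
  (1 <= r <= N)%N ->
  (Zpoly lam T)`_(N - r) =
  \sum_(mu : {ffun 'I_n -> 'I_N.+1}
          | [forall i, (mu i <= lam i)%N] && ((\sum_(i < n) mu i)%N == r))
    \sum_(nu : {ffun 'I_n -> 'I_N.+1} | [forall i, (nu i <= mu i)%N])
      (Zcoef lam (fun i => mu i : nat) (fun i => nu i : nat))%:~R *
      cdet (fun i j => T i j (nu j)).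
Proof.
(* The identity is formal. *)
move=> N /andP[_ rN]; rewrite /Zpoly /cdet coef_sum.
under eq_bigr => w _ do
  rewrite -(rmorph_sign polyC) coefCM coef_prod_Zentry // mulr_sumr.
rewrite exchange_big; apply: eq_bigr => mu _.
under eq_bigr => w _ do rewrite prod_Zentry_coef mulr_sumr.
rewrite exchange_big; apply: eq_bigr => nu _.
rewrite mulr_sumr; apply: eq_bigr => w _.
by rewrite !mulrA (commr_sign _ (odd_perm w)).
Qed.
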